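(* Let $n\ge 2$ and let $S=[A_0,\dots,A_n]$ be an $n$-pre-kite. If the circumcenter and the centroid of $S$ coincide, then $S$ is a regular $n$-simplex.
   Context: An $n$-simplex is the convex hull of $n+1$ affinely independent points in a Euclidean space. It is an $n$-pre-kite if one of its facets (the $(n-1)$-simplex obtained by deleting one vertex) is a regular $(n-1)$-simplex, i.e. has all edges of equal length. The circumcenter of $S$ is the center of the $(n-1)$-sphere in the affine hull of $S$ passing through all vertices; the centroid is $(A_0+\cdots+A_n)/(n+1)$. $S$ is regular if all its edges have the same length. *)

From HB Require Import structures.
From mathcomp Require Import all_boot all_order all_algebra.
Set Implicit Arguments. Unset Strict Implicit. Unset Printing Implicit Defensive.
Import Order.TTheory GRing.Theory Num.Theory.
Local Open Scope ring_scope.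

Section Simplex.
Variables (R : rcfType) (d : nat).

Definition edist (x y : 'rV[R]_d) : R :=
  Num.sqrt (\sum_(j < d) (x 0 j - y 0 j) ^+ 2).

Variable n : nat.

(* affine independence of A_0, ..., A_n: the vectors A_i - A_0 (i = 1..n)
   are linearly independent *)
Definition affinely_independent (A : 'I_n.+1 -> 'rV[R]_d) : bool :=
  row_free (\matrix_(i < n) (A (lift ord0 i) - A ord0)).

Definition regular_simplex (A : 'I_n.+1 -> 'rV[R]_d) : Prop :=
  forall i j k l : 'I_n.+1, i != j -> k != l ->
    edist (A i) (A j) = edist (A k) (A l).

(* some facet (delete vertex m) is a regular (n-1)-simplex *)
Definition pre_kite (A : 'I_n.+1 -> 'rV[R]_d) : Prop :=
  exists m : 'I_n.+1, forall i j k l : 'I_n.+1,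
    i != m -> j != m -> k != m -> l != m -> i != j -> k != l ->
    edist (A i) (A j) = edist (A k) (A l).

Definition centroid (A : 'I_n.+1 -> 'rV[R]_d) : 'rV[R]_d :=
  (n.+1)%:R^-1 *: \sum_(i < n.+1) A i.

(* O is the circumcenter: O lies in the affine hull of the vertices and is
   equidistant from all of them (such a point is unique for a simplex) *)
Definition is_circumcenter (A : 'I_n.+1 -> 'rV[R]_d) (O : 'rV[R]_d) : Prop :=
  (exists c : 'I_n.+1 -> R, \sum_(i < n.+1) c i = 1 /\
      O = \sum_(i < n.+1) c i *: A i) /\
  forall i j : 'I_n.+1, edist O (A i) = edist O (A j).

End Simplex.

(* Let G be the centroid and B_i = G - A_i, so that sum_i B_i = 0.  As G is
   also the circumcenter, all B_i have the same squared norm r, hence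
   |A_i - A_j|^2 = 2 (r - <B_i, B_j>) and edge lengths are read off the Gram
   matrix of the B_i.  If the facet opposite A_m is regular, <B_i, B_j> = c
   for distinct i, j <> m.  Pairing B_i with sum_j B_j = 0 gives one linear
   relation per row of the Gram matrix: the rows i <> m show that
   e = <B_i, B_m> does not depend on i, and then rows i and m together give
   (n - 1) (c - e) = 0, so e = c. *)

From HB Require Import structures.
From mathcomp Require Import all_boot all_order all_algebra.
From mathcomp Require Import ring.
Import Order.TTheory GRing.Theory Num.Theory.
Local Open Scope ring_scope.

Set Implicit Arguments. Unset Strict Implicit.

Lemma sumr_ord_shift (V : zmodType) N (F : 'I_N -> V) a :
  \sum_j F j = a *+ N + \sum_j (F j - a).
Proof. by rewrite sumrB sumr_const card_ord addrC subrK. Qed.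

Lemma sumr_const_but1 (V : zmodType) N (F : 'I_N -> V) m a :
  (forall j, j != m -> F j = a) -> \sum_j F j = a *+ N + (F m - a).
Proof.
move=> Fa; rewrite (sumr_ord_shift _ a) (bigD1 m) //= big1 ?addr0 // => j /Fa->.
exact: subrr.
Qed.

Lemma sumr_const_but2 (V : zmodType) N (F : 'I_N -> V) i m a :
  i != m -> (forall j, j != i -> j != m -> F j = a) ->
  \sum_j F j = a *+ N + (F i - a) + (F m - a).
Proof.
move=> im Fa; rewrite (sumr_ord_shift _ a) (bigD1 i) //= (bigD1 m) /= 1?eq_sym //.
by rewrite big1 ?addr0 ?addrA // => j /andP[ji jm]; rewrite Fa ?subrr.
Qed.

Section Dot.
Variables (R : comPzRingType) (d : nat).

Definition dot (u v : 'rV[R]_d) : R := \sum_(k < d) u 0 k * v 0 k.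

Lemma dotC u v : dot u v = dot v u.
Proof. by apply: eq_bigr => k _; rewrite mulrC. Qed.

Lemma dotBr u v w : dot u (v - w) = dot u v - dot u w.
Proof. by rewrite /dot -sumrB; apply: eq_bigr => k _; rewrite !mxE mulrBr. Qed.

Lemma dotBl u v w : dot (v - w) u = dot v u - dot w u.
Proof. by rewrite dotC dotBr dotC [dot u w]dotC. Qed.

Lemma dot0r u : dot u 0 = 0.
Proof. by rewrite /dot big1 // => k _; rewrite mxE mulr0. Qed.

Lemma dot_sumr I (r : seq I) (P : pred I) u (F : I -> 'rV[R]_d) :
  dot u (\sum_(i <- r | P i) F i) = \sum_(i <- r | P i) dot u (F i).
Proof.
rewrite /dot exchange_big /=; apply: eq_bigr => k _.
by rewrite summxE big_distrr.
Qed.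

Lemma dot_subB_pivot o x y :
  dot (x - y) (x - y) = dot (o - x) (o - x) + dot (o - y) (o - y) - dot (o - x) (o - y) *+ 2.
Proof.
have -> : x - y = (o - y) - (o - x) by rewrite [RHS]addrC opprB addrA subrK.
rewrite !dotBl !dotBr [dot x o]dotC [dot y o]dotC [dot y x]dotC; ring.
Qed.

End Dot.

Section EuclideanDistance.
Variables (R : rcfType) (d : nat).
Implicit Types x y z w : 'rV[R]_d.

Lemma dot_ge0 x : 0 <= dot x x.
Proof. by apply: sumr_ge0 => k _; rewrite -expr2 sqr_ge0. Qed.

Lemma edistE x y : edist x y = Num.sqrt (dot (x - y) (x - y)).
Proof.
by rewrite /edist /dot; congr Num.sqrt; apply: eq_bigr => k _; rewrite !mxE expr2.
Qed.

Lemma edist_eqE x y z w :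
  (edist x y == edist z w) = (dot (x - y) (x - y) == dot (z - w) (z - w)).
Proof. by rewrite !edistE eqr_sqrt ?dot_ge0. Qed.

Lemma sumr_centroid_sub n (A : 'I_n.+1 -> 'rV[R]_d) :
  \sum_i (centroid A - A i) = 0.
Proof.
rewrite sumrB sumr_const card_ord /centroid -scaler_nat scalerA.
by rewrite mulfV ?scale1r ?subrr // pnatr_eq0.
Qed.

End EuclideanDistance.

Section KiteGram.
Variables (R : numDomainType) (d n : nat) (B : 'I_n.+1 -> 'rV[R]_d).
Variables (m : 'I_n.+1) (r c : R).
Hypotheses (n_neq1 : n != 1%N) (sumB0 : \sum_i B i = 0).
Hypothesis normB : forall i, dot (B i) (B i) = r.
Hypothesis facetB : forall i j, i != m -> j != m -> i != j -> dot (B i) (B j) = c.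

Lemma gram_row_sum0 i : \sum_j dot (B i) (B j) = 0.
Proof. by rewrite -dot_sumr sumB0 dot0r. Qed.

Lemma gram_facet_row i : i != m ->
  c *+ n.+1 + (r - c) + (dot (B i) (B m) - c) = 0.
Proof.
move=> im; rewrite -(gram_row_sum0 i) (sumr_const_but2 (a := c) im) ?normB //.
by move=> j ji jm; rewrite facetB // eq_sym.
Qed.

Lemma gram_apex_const i k : i != m -> k != m ->
  dot (B i) (B m) = dot (B k) (B m).
Proof.
by move=> im km; move: (gram_facet_row km); rewrite -(gram_facet_row im) => /addrI/addIr.
Qed.

Lemma gram_apex i : i != m -> dot (B i) (B m) = c.
Proof.
move=> im; set e := dot (B i) (B m).
have apex_row : e *+ n.+1 + (r - e) = 0.
  rewrite -(gram_row_sum0 m) (sumr_const_but1 (m := m) (a := e)) ?normB // => j jm.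
  by rewrite dotC (gram_apex_const jm im).
have : (c - e) * (n%:R - 1) = 0.
  rewrite -[0]subr0 -{1}(gram_facet_row im) -apex_row -/e; ring.
move/eqP; rewrite mulf_eq0 !subr_eq0 pnatr_eq1 (negbTE n_neq1) orbF.
by move/eqP.
Qed.

Lemma gram_offdiag_const i j : i != j -> dot (B i) (B j) = c.
Proof.
move=> ij; have [eim|im] := eqVneq i m.
  by rewrite eim dotC gram_apex // -eim eq_sym.
have [ejm|jm] := eqVneq j m; first by rewrite ejm gram_apex.
exact: facetB.
Qed.

End KiteGram.

Theorem theorem6p2 (R : rcfType) (d n : nat) (A : 'I_n.+1 -> 'rV[R]_d) :
  (2 <= n)%N ->
  affinely_independent A ->
  pre_kite A ->
  is_circumcenter A (centroid A) ->
  regular_simplex A.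
Proof.
move=> n_gt1 _ [m kite] [_ eq_circ].
pose B i := centroid A - A i.
pose r := dot (B ord0) (B ord0).
have normB i : dot (B i) (B i) = r by apply/eqP; rewrite -edist_eqE (eq_circ i ord0).
have distE i j : dot (A i - A j) (A i - A j) = (r - dot (B i) (B j)) *+ 2.
  by rewrite (dot_subB_pivot (centroid A)) !normB mulrnBl mulr2n.
pose p := lift m (Ordinal (ltnW n_gt1)); pose q := lift m (Ordinal n_gt1).
have [pm qm] : p != m /\ q != m by rewrite ![_ == m]eq_sym !neq_lift.
have pq : p != q by rewrite (inj_eq lift_inj).
have facetB i j : i != m -> j != m -> i != j -> dot (B i) (B j) = dot (B p) (B q).
  move=> im jm ij; move/eqP: (kite i j p q im jm pm qm ij pq).
  by rewrite edist_eqE !distE => /eqP/(pmulrnI (isT : (0 < 2)%N))/addrI/oppr_inj.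
have gram := gram_offdiag_const (negbT (gtn_eqF n_gt1)) (sumr_centroid_sub A) normB facetB.
by move=> i j k l ij kl; apply/eqP; rewrite edist_eqE !distE !gram.
Qed.
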